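(* Let $A\in\mathbb{R}^{n\times n}$, $B\in\mathbb{R}^{n\times m}$ with $m\ge1$ and $(A,B)$ uncontrollable, and let $r_c=r_c(A,B)$ be its zero-norm distance to controllability. Then (1) $r_c\le n-\operatorname{rank}B$ if $\operatorname{rank}B\ge 1$, and $r_c\le n$ if $\operatorname{rank}B=0$; (2) $r_c\ge \min\{|J|: J\subseteq\{1,\dots,n\},\ (A,[B,\ I_n(:,J)])\text{ is controllable}\}$.
   Context: $r_c(A,B)=\min\{\|[\Delta A,\Delta B]\|_0: \Delta A\in\mathbb{R}^{n\times n},\Delta B\in\mathbb{R}^{n\times m},(A+\Delta A,B+\Delta B)\text{ controllable}\}$, where $\|M\|_0$ is the number of nonzero entries of $M$. $I_n(:,J)$ is the submatrix of the $n\times n$ identity matrix consisting of the columns indexed by $J$. Controllability of $(A,B)$ means $\operatorname{rank}[B,AB,\dots,A^{n-1}B]=n$. *)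

From Stdlib Require Import ClassicalEpsilon.
From mathcomp Require Import all_boot all_order all_algebra.
From mathcomp Require Import reals.
Set Implicit Arguments. Unset Strict Implicit. Unset Printing Implicit Defensive.
Import Order.TTheory GRing.Theory Num.Theory.
Local Open Scope ring_scope.

(* The least natural number satisfying P (0 if none exists; classical). *)
Definition natmin (P : nat -> Prop) : nat :=
  match excluded_middle_informative (exists k, P k) with
  | left h =>
      @ex_minn (fun k => if excluded_middle_informative (P k) then true else false)
        (let: ex_intro k hk := h in
         ex_intro _ k (match excluded_middle_informative (P k) as b
                        return (if b then true else false) with
                       | left _ => erefl | right nk => False_ind _ (nk hk) end))
  | right _ => 0%N
  end.

Definition nnz (R : ringType) p q (M : 'M[R]_(p, q)) : nat :=
  #|[pred ij : 'I_p * 'I_q | M ij.1 ij.2 != 0]|.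

Definition ctrb_mx (R : ringType) n m (A : 'M[R]_n) (B : 'M[R]_(n, m)) :=
  \mxrow_(k < n) (A ^+ k *m B).

Definition controllable (R : fieldType) n m (A : 'M[R]_n) (B : 'M[R]_(n, m)) :
  Prop := \rank (ctrb_mx A B) = n.

(* I_n(:,J) : columns of the identity indexed by J (in increasing order). *)
Definition id_cols (R : ringType) n (J : {set 'I_n}) : 'M[R]_(n, #|J|) :=
  \matrix_(i < n, j < #|J|) (i == enum_val j)%:R.

Definition rc (R : fieldType) n m (A : 'M[R]_n) (B : 'M[R]_(n, m)) : nat :=
  natmin (fun k => exists (dA : 'M[R]_n) (dB : 'M[R]_(n, m)),
            nnz (row_mx dA dB) = k /\ controllable (A + dA) (B + dB)).

Definition min_aug (R : fieldType) n m (A : 'M[R]_n) (B : 'M[R]_(n, m)) : nat :=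
  natmin (fun k => exists J : {set 'I_n},
            #|J| = k /\ controllable A (row_mx B (id_cols R J))).

(** Lower bound: if [(A + dA, B + dB)] is controllable, let [J] be the set of rows
    in which [[dA, dB]] has a nonzero entry. A row vector vanishing on [J] does not
    see the perturbation, so a left annihilator of all [A^k [B, I_n(:,J)]] also
    annihilates all [(A + dA)^k (B + dB)]; hence [(A, [B, I_n(:,J)])] is controllable
    and [|J| <= ||[dA, dB]||_0].

    Upper bound: pick [d = n - rank B] coordinates [s_1, ..., s_d] separating the left
    kernel of [B] (the columns of a column basis of [kermx B]) and an index [a] outside
    them. The shift [C] along the chain [a -> s_1 -> ... -> s_d] has [d] nonzero
    entries, is nilpotent, and its left kernel consists of the vectors vanishing on
    the [s_i]; descending through the powers [v C^k] then shows that [(C, B)] is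
    controllable. Controllability of [(C + t A, B)] fails only at the roots of a
    nonzero polynomial in [t], so [(A + t^-1 C, B)] is controllable for some
    [t <> 0]. When [B = 0], one entry of [B] is perturbed first. *)

From Stdlib Require Import ClassicalEpsilon.
From mathcomp Require Import all_boot all_order all_algebra zify.
From mathcomp Require Import reals.
Set Implicit Arguments. Unset Strict Implicit. Unset Printing Implicit Defensive.
Import Order.TTheory GRing.Theory Num.Theory.
Local Open Scope ring_scope.

Lemma natmin_le (P : nat -> Prop) k : P k -> (natmin P <= k)%N.
Proof.
move=> Pk; rewrite /natmin.
case: excluded_middle_informative => [ex|[]]; last by exists k.
case: ex_minnP => j _; apply.
by case: excluded_middle_informative.
Qed.

Lemma natminP (P : nat -> Prop) : (exists k, P k) -> P (natmin P).
Proof.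
rewrite /natmin => ex.
case: excluded_middle_informative => [{}ex|//].
by case: ex_minnP => k; case: excluded_middle_informative.
Qed.

Section ZeroNorm.
Variable R : fieldType.

Lemma nnzE p q (M : 'M[R]_(p, q)) :
  nnz M = (\sum_(i < p) \sum_(j < q) (M i j != 0%R))%N.
Proof.
rewrite /nnz pair_big /= -sum1_card big_mkcond /=.
by apply: eq_bigr => -[i j] _; rewrite inE; case: (M i j != 0).
Qed.

Lemma nnz0 p q : nnz (0 : 'M[R]_(p, q)) = 0%N.
Proof. by rewrite nnzE big1 // => i _; rewrite big1 // => j _; rewrite mxE eqxx. Qed.

Lemma nnz_delta p q (i0 : 'I_p) (j0 : 'I_q) :
  nnz (delta_mx i0 j0 : 'M[R]_(p, q)) = 1%N.
Proof.
rewrite /nnz -(card1 (i0, j0)); apply: eq_card => -[i j].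
by rewrite !inE mxE xpair_eqE /=; case: (_ && _); rewrite ?oner_neq0 ?eqxx.
Qed.

Lemma nnzD p q (X Y : 'M[R]_(p, q)) : (nnz (X + Y) <= nnz X + nnz Y)%N.
Proof.
rewrite !nnzE -big_split leq_sum // => i _; rewrite -big_split leq_sum // => j _.
rewrite mxE; have [-> | _] := eqVneq (X i j) 0; first by rewrite add0r.
by case: (_ != 0).
Qed.

Lemma nnz_scale p q (a : R) (X : 'M[R]_(p, q)) : (nnz (a *: X) <= nnz X)%N.
Proof.
rewrite !nnzE leq_sum // => i _; rewrite leq_sum // => j _.
rewrite mxE; have [-> | _] := eqVneq (X i j) 0; first by rewrite mulr0 eqxx.
by case: (_ != 0).
Qed.

Lemma nnz_row_mx p q1 q2 (X : 'M[R]_(p, q1)) (Y : 'M[R]_(p, q2)) :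
  nnz (row_mx X Y) = (nnz X + nnz Y)%N.
Proof.
rewrite !nnzE -big_split; apply: eq_bigr => i _.
by rewrite big_split_ord; congr (_ + _)%N; apply: eq_bigr => j _;
  rewrite (row_mxEl, row_mxEr).
Qed.

End ZeroNorm.

Section Controllability.
Variable R : fieldType.

Lemma controllableP n m (A : 'M[R]_n) (B : 'M[R]_(n, m)) :
  controllable A B <->
  (forall v : 'rV_n, (forall k : 'I_n, v *m (A ^+ k *m B) = 0) -> v = 0).
Proof.
have mul_ctrb_eq0 (v : 'rV_n) :
    v *m ctrb_mx A B = 0 <-> forall k : 'I_n, v *m (A ^+ k *m B) = 0.
  by rewrite mul_mxrow -(mxrow0 (q_ := fun=> m)); split => /eq_mxrowP.
split=> [free v /mul_ctrb_eq0 vAB | vAB].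
  by apply/eqP; rewrite -(mulmx_free_eq0 _ (introT eqP free)) vAB.
by apply/eqP/inj_row_free => v /mul_ctrb_eq0; apply: vAB.
Qed.

Definition nz_rows n p (M : 'M[R]_(n, p)) : {set 'I_n} :=
  [set i | [exists j, M i j != 0]].

Lemma card_nz_rows n p (M : 'M[R]_(n, p)) : (#|nz_rows M| <= nnz M)%N.
Proof.
rewrite nnzE -sum1_card big_mkcond leq_sum // => i _; rewrite inE.
case: existsP => [[j nzM] | //]; rewrite (bigD1 j) //= nzM.
exact: leq_addr.
Qed.

Lemma mul_nz_rows_eq0 n p (M : 'M[R]_(n, p)) (u : 'rV[R]_n) :
  {in nz_rows M, forall i, u 0 i = 0} -> u *m M = 0.
Proof.
move=> u0; apply/rowP => j; rewrite !mxE big1 // => i _.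
have [-> | nzM] := eqVneq (M i j) 0; first by rewrite mulr0.
by rewrite u0 ?mul0r // inE; apply/existsP; exists j.
Qed.

Lemma mul_id_cols_eq0 n (J : {set 'I_n}) (u : 'rV[R]_n) :
  u *m id_cols R J = 0 -> {in J, forall i, u 0 i = 0}.
Proof.
move=> /rowP uJ i iJ; have := uJ (enum_rank_in iJ i); rewrite !mxE => <-.
rewrite (bigD1 i) //= big1 => [|k /negPf ki].
  by rewrite !mxE enum_rankK_in // eqxx mulr1 addr0.
by rewrite !mxE enum_rankK_in // ki mulr0.
Qed.

Lemma controllable_nz_rows n m (A dA : 'M[R]_n) (B dB : 'M[R]_(n, m)) :
  controllable (A + dA) (B + dB) ->
  controllable A (row_mx B (id_cols R (nz_rows (row_mx dA dB)))).
Proof.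
move=> /controllableP ctrl; apply/controllableP => v vAB.
have vAk k : (k < n)%N ->
    [/\ v *m A ^+ k *m B = 0, v *m A ^+ k *m dA = 0 & v *m A ^+ k *m dB = 0].
  move=> kn; have := vAB (Ordinal kn); rewrite mulmxA mul_mx_row => /eqP.
  rewrite row_mx_eq0 => /andP[/eqP vB /eqP/mul_id_cols_eq0/mul_nz_rows_eq0].
  by rewrite mul_mx_row => /eqP; rewrite row_mx_eq0 => /andP[/eqP vdA /eqP vdB].
have vApert k : (k < n)%N -> v *m (A + dA) ^+ k = v *m A ^+ k.
  elim: k => [|k IH] kn; first by rewrite !expr0.
  have [_ vdA _] := vAk k (ltnW kn).
  by rewrite !exprSr !mulmxA IH ?(ltnW kn) // mulmxDr vdA addr0.
apply: ctrl => k; have [vB _ vdB] := vAk k (ltn_ord k).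
by rewrite mulmxA vApert // mulmxDr vB vdB addr0.
Qed.

End Controllability.

Lemma exprSD_nil (T : pzRingType) (x y : T) k :
  y * x = 0 -> y * y = 0 -> (x + y) ^+ k.+1 = x ^+ k.+1 + x ^+ k * y.
Proof.
move=> yx yy; elim: k => [|k IH]; first by rewrite expr0 mul1r expr1.
by rewrite exprSr IH mulrDr !mulrDl -!mulrA yx yy !mulr0 !addr0 -!exprSr.
Qed.

Section Chain.
Variables (R : fieldType) (n : nat).
Implicit Types (s : seq 'I_n) (u : 'rV[R]_n).

Fixpoint chain_mx s : 'M[R]_n :=
  if s is a :: s' then if s' is b :: _ then delta_mx b a + chain_mx s' else 0
  else 0.

Lemma chain_mx_support s i j : chain_mx s i j != 0 -> (i \in s) && (j \in s).
Proof.
elim: s => [|a s IH] /=; first by rewrite mxE eqxx.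
case: s IH => [|b s] IH; first by rewrite mxE eqxx.
rewrite !mxE; have [/andP[/eqP-> /eqP->] _ | _] := boolP ((i == b) && (j == a)).
  by rewrite !inE !eqxx orbT.
by rewrite /= add0r => /IH /andP[ibs jbs]; rewrite !(in_cons a) ibs jbs !orbT.
Qed.

Lemma nnz_chain_mx s : (nnz (chain_mx s) <= (size s).-1)%N.
Proof.
elim: s => [|a s IH] /=; first by rewrite nnz0.
case: s IH => [|b s] IH; first by rewrite nnz0.
by apply: leq_trans (nnzD _ _) _; rewrite nnz_delta ltnS.
Qed.

Lemma mul_rV_delta_mx u (i j : 'I_n) : u *m delta_mx i j = u 0 i *: delta_mx 0 j.
Proof.
apply/rowP => k; rewrite !mxE (bigD1 i) //= big1 => [|l /negPf li].
  by rewrite mxE eqxx addr0 /= mulr_natr.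
by rewrite mxE li mulr0.
Qed.

Lemma chain_mx_nilpotent a s : uniq (a :: s) -> chain_mx (a :: s) ^+ (size s).+1 = 0.
Proof.
elim: s a => [|b s IH] a; first by rewrite expr1.
move=> /andP[abs ubs].
have ab : a != b by apply: contraNneq abs => ->; rewrite mem_head.
have -> : chain_mx [:: a, b & s] = delta_mx b a + chain_mx (b :: s) by [].
have deltaC : delta_mx b a * chain_mx (b :: s) = 0.
  rewrite -mulmxE; apply/matrixP => i j; rewrite !mxE big1 // => k _.
  rewrite mxE; have [-> | _] := eqVneq k a; last by rewrite andbF mul0r.
  have [-> | /chain_mx_support] := eqVneq (chain_mx (b :: s) a j) 0.
    by rewrite mulr0.
  by rewrite (negPf abs).
have delta2 : delta_mx b a * delta_mx b a = 0 :> 'M[R]_n.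
  by rewrite -mulmxE mul_delta_mx_0 // eq_sym.
by rewrite addrC exprSD_nil // exprS IH // mulr0 mul0r addr0.
Qed.

Lemma chain_mx_left_kernel s u :
  uniq s -> u *m chain_mx s = 0 -> {in behead s, forall i, u 0 i = 0}.
Proof.
elim: s => [|a s IH] //; case: s IH => [|b s] IH //.
move=> /andP[abs ubs]; rewrite [chain_mx _]/= mulmxDr => uC.
have ub : u 0 b = 0.
  have /rowP/(_ a) := uC; rewrite mxE [X in _ + X]mxE big1 => [|k _].
    by rewrite mul_rV_delta_mx !mxE !eqxx mulr1 addr0.
  have [-> | /chain_mx_support] := eqVneq (chain_mx (b :: s) k a) 0.
    by rewrite mulr0.
  by rewrite (negPf abs) andbF.
move: uC; rewrite mul_rV_delta_mx ub scale0r add0r => /IH -/(_ ubs) uC0 i.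
by rewrite inE => /orP[/eqP -> | /uC0].
Qed.

End Chain.

Lemma colsub_basis_eq0 (R : fieldType) p n r (K : 'M[R]_(p, n))
    (f : 'I_r -> 'I_n) (u : 'rV[R]_n) :
  (K^T <= mxsub f id K^T)%MS -> (u <= K)%MS -> mxsub id f u = 0 -> u = 0.
Proof.
move=> /submxP[X eKX] /submxP[w ->] u0; apply: trmx_inj.
rewrite trmx_mul eKX -mulmxA mul_rowsub_mx -trmx_mul -trmx_mxsub u0.
by rewrite !trmx0 mulmx0.
Qed.

Section Separating.
Variables (R : fieldType) (n m : nat) (B : 'M[R]_(n, m)).

Definition separates_kernel (s : seq 'I_n) :=
  forall u : 'rV[R]_n, u *m B = 0 -> {in s, forall i, u 0 i = 0} -> u = 0.

Lemma chain_mx_controllable a s :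
  uniq (a :: s) -> (size s < n)%N -> separates_kernel s ->
  controllable (chain_mx R (a :: s)) B.
Proof.
move=> us sn sep; set C := chain_mx R (a :: s).
apply/controllableP => v vCB.
suff vC0 j : v *m C ^+ ((size s).+1 - j) = 0.
  by have := vC0 (size s).+1; rewrite subnn mulmx1.
elim: j => [|j IH]; first by rewrite subn0 chain_mx_nilpotent // mulmx0.
have [sj | js] := leqP (size s).+1 j.
  by have -> : ((size s).+1 - j.+1 = (size s).+1 - j)%N by lia.
set k := ((size s).+1 - j.+1)%N; have kn : (k < n)%N by lia.
apply: sep; first by have := vCB (Ordinal kn); rewrite mulmxA.
apply: (chain_mx_left_kernel us).
have kS : k.+1 = ((size s).+1 - j)%N by lia.
by rewrite -mulmxA mulmxE -exprSr kS.
Qed.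

Lemma exists_separating_seq :
  exists s, [/\ uniq s, size s = (n - \rank B)%N & separates_kernel s].
Proof.
set K := kermx B; pose f := maxrankfun K^T.
exists [seq f j | j <- enum 'I_(\rank K^T)]; split.
- by rewrite map_inj_uniq ?enum_uniq //; apply: maxrankfun_inj.
- by rewrite size_map size_enum_ord mxrank_tr mxrank_ker.
move=> u /sub_kermxP uK u0; apply: (colsub_basis_eq0 (f := f) _ uK).
  by rewrite eq_maxrowsub.
by apply/rowP => j; rewrite !mxE u0 // map_f ?mem_enum.
Qed.

End Separating.

Lemma map_ctrb_mx (aR rR : comNzRingType) (f : {rmorphism aR -> rR}) n m
    (A : 'M[aR]_n) (B : 'M[aR]_(n, m)) :
  map_mx f (ctrb_mx A B) = ctrb_mx (map_mx f A) (map_mx f B).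
Proof.
have map_exp k : map_mx f (A ^+ k) = map_mx f A ^+ k.
  by elim: k => [|k IH]; rewrite ?map_mx1 // !exprS -!mulmxE map_mxM IH.
have map_submxrow p (M : 'M[aR]_(p, \sum_(k < n) m)) j :
    submxrow (map_mx f M) j = map_mx f (submxrow M j).
  by apply/matrixP => a b; rewrite !mxE.
by apply/mxrowP => j; rewrite map_submxrow !mxrowK map_mxM map_exp.
Qed.

Lemma controllableZ (R : fieldType) n m (a : R) (A : 'M[R]_n) (B : 'M[R]_(n, m)) :
  a != 0 -> controllable A B -> controllable (a *: A) B.
Proof.
move=> a0 /controllableP ctrl; apply/controllableP => v vAB; apply: ctrl => k.
have exprZ j : (a *: A) ^+ j = a ^+ j *: A ^+ j.
  elim: j => [|j IH]; first by rewrite !expr0 scale1r.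
  by rewrite !exprS IH -!mulmxE -scalemxAl -scalemxAr scalerA -exprS.
have /eqP := vAB k; rewrite exprZ -scalemxAl -scalemxAr scaler_eq0.
by rewrite expf_eq0 (negPf a0) andbF => /eqP.
Qed.

(* [P.[x] = det (ctrb_mx (C + x A) B *m N)] with [N] a right inverse of
   [ctrb_mx C B], so [P.[0] = 1]; one of [1, ..., size P] is not a root of [P]. *)
Lemma controllable_shift (R : numFieldType) n m
    (C A : 'M[R]_n) (B : 'M[R]_(n, m)) :
  controllable C B -> exists2 t : R, t != 0 & controllable (C + t *: A) B.
Proof.
move=> ctrl; have /row_freeP[N CN] : row_free (ctrb_mx C B) by apply/eqP.
pose P := \det (ctrb_mx (map_mx polyC C + 'X *: map_mx polyC A) (map_mx polyC B)
                *m map_mx polyC N).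
have mapCK p q (M : 'M[R]_(p, q)) t : map_mx (horner_eval t) (map_mx polyC M) = M.
  by apply/matrixP => a b; rewrite !mxE /= horner_evalE hornerC.
have PE t : P.[t] = \det (ctrb_mx (C + t *: A) B *m N).
  rewrite -horner_evalE -det_map_mx map_mxM map_ctrb_mx map_mxD map_mxZ !mapCK.
  by rewrite /= horner_evalE hornerX.
have P0 : P != 0.
  apply: contraTneq isT => P0; have := PE 0.
  by rewrite P0 horner0 scale0r addr0 CN det1 => /eqP; rewrite eq_sym oner_eq0.
pose ts := [seq i.+1%:R : R | i <- iota 0 (size P)].
have uts : uniq ts.
  by rewrite map_inj_uniq ?iota_uniq // => i j /eqP; rewrite eqr_nat => /eqP[].
have [_ /mapP[i _ ->] Pt] : exists2 t, t \in ts & ~~ root P t.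
  apply/allPn/negP => /(max_poly_roots P0)/(_ uts).
  by rewrite size_map size_iota ltnn.
exists i.+1%:R; first by rewrite pnatr_eq0.
have CtN_unit : ctrb_mx (C + i.+1%:R *: A) B *m N \in unitmx.
  by rewrite unitmxE unitfE -PE.
apply/eqP; rewrite eqn_leq rank_leq_row -{1}(mxrank_unit CtN_unit).
exact: mxrankM_maxl.
Qed.

Lemma sparse_controllable_shift (R : numFieldType) n m
    (A : 'M[R]_n) (B : 'M[R]_(n, m)) :
  (0 < \rank B)%N -> exists dA, (nnz dA <= n - \rank B)%N /\ controllable (A + dA) B.
Proof.
move=> rB; have [s [us ss sep]] := exists_separating_seq B.
have sn : (size s < n)%N by have := rank_leq_row B; lia.
have [a sa] : exists a, a \notin s.
  apply/existsP; rewrite -negb_forall; apply: contraTN sn => /forallP sT.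
  rewrite -leqNgt -[n in (n <= _)%N]card_ord (leq_trans _ (card_size s)) //.
  by apply/subset_leq_card/subsetP.
have uas : uniq (a :: s) by rewrite /= sa.
have [t t0 ctrl] := controllable_shift A (chain_mx_controllable uas sn sep).
exists (t^-1 *: chain_mx R (a :: s)); split.
  by rewrite (leq_trans (nnz_scale _ _)) // (leq_trans (nnz_chain_mx _ _)) //= ss.
have := controllableZ (invr_neq0 t0) ctrl.
by rewrite scalerDr scalerA mulVf // scale1r addrC.
Qed.

Lemma exists_sparse_controllable (R : numFieldType) n m
    (A : 'M[R]_n) (B : 'M[R]_(n, m)) :
  (0 < n)%N -> (0 < m)%N -> exists dA dB,
    controllable (A + dA) (B + dB) /\ (nnz (row_mx dA dB) <= n - \rank B)%N.
Proof.
move=> n0 m0; have [rB0 | rB] := posnP (\rank B); last first.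
  have [dA [nnzA ctrl]] := sparse_controllable_shift A rB.
  by exists dA, 0; rewrite addr0 nnz_row_mx nnz0 addn0.
pose dB : 'M[R]_(n, m) := delta_mx (Ordinal n0) (Ordinal m0).
have [|dA [nnzA ctrl]] := sparse_controllable_shift A (B := dB).
  by rewrite mxrank_delta.
exists dA, dB; move/eqP: rB0; rewrite mxrank_eq0 => /eqP->; rewrite add0r.
split=> //; rewrite nnz_row_mx nnz_delta mxrank0 subn0 addn1.
by rewrite (leq_ltn_trans nnzA) // mxrank_delta ltn_subrL n0.
Qed.

Theorem theorem4 (R : realType) (n m : nat)
  (A : 'M[R]_n) (B : 'M[R]_(n, m)) :
  (0 < m)%N -> ~ controllable A B ->
  ((0 < \rank B)%N -> (rc A B <= n - \rank B)%N) /\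
  (\rank B = 0%N -> (rc A B <= n)%N) /\
  (min_aug A B <= rc A B)%N.
Proof.
move=> m0 nc.
have n0 : (0 < n)%N.
  rewrite lt0n; apply/eqP => n0; apply: nc; apply/eqP.
  by rewrite eqn_leq rank_leq_row /= [X in (X <= _)%N]n0.
have [dA [dB [ctrl nnzd]]] := exists_sparse_controllable A B n0 m0.
have rc_le : (rc A B <= n - \rank B)%N.
  by apply: leq_trans nnzd; apply: natmin_le; exists dA, dB.
split=> //; split=> [rB0 | ]; first by rewrite rB0 subn0 in rc_le.
rewrite /rc; set P := fun k => _.
have [dA' [dB' [<- ctrl']]] : P (natmin P).
  by apply: natminP; exists (nnz (row_mx dA dB)), dA, dB.
apply: leq_trans (card_nz_rows _); apply: natmin_le.
by exists (nz_rows (row_mx dA' dB')); split; last exact: controllable_nz_rows.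
Qed.
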